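(* Let $\mathcal{A}=(Q,\delta,s)$ be an NFA over a finite alphabet $\Sigma$ and let $B$ be any bisimulation on $\mathcal{A}^{-1}$. Then the partition $\mathcal{P}_B$ is forward-stable on $\mathcal{A}$.
   Context: An NFA is $\mathcal{A}=(Q,\delta,s)$ with $\delta:Q\times\Sigma\to2^Q$; write $\delta_a(u)=\delta(u,a)$, $\delta_a(T)=\bigcup_{u\in T}\delta_a(u)$ and $\delta_a^{-1}(u)=\{v:u\in\delta_a(v)\}$. $\mathcal{A}^{-1}=(Q,\delta^{-1},s)$ is the NFA with $\delta^{-1}(u,a)=\delta^{-1}_a(u)$ (all transitions reversed). A bisimulation on an NFA $(Q,\gamma,s)$ is a relation $B\subseteq Q\times Q$ such that for all $(u,v)\in B$ and $a\in\Sigma$: if $u'\in\gamma_a(u)$ then there is $v'\in\gamma_a(v)$ with $(u',v')\in B$, and if $v'\in\gamma_a(v)$ then there is $u'\in\gamma_a(u)$ with $(u',v')\in B$. $\mathcal{P}_B$ is the partition of $Q$ into the weakly connected components of the directed graph $(Q,B)$. A partition $\mathcal{P}$ of $Q$ is forward-stable on $\mathcal{A}$ if for any parts $S,T\in\mathcal{P}$ and every $a\in\Sigma$, $S\subseteq\delta_a(T)$ or $S\cap\delta_a(T)=\emptyset$. *)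

From mathcomp Require Import all_boot.
Set Implicit Arguments. Unset Strict Implicit. Unset Printing Implicit Defensive.

Record NFA (Sigma : finType) := mkNFA {
  state : finType;
  delta : state -> Sigma -> {set state};
  start : state }.

Definition delta_set (Sigma : finType) (A : NFA Sigma) (a : Sigma)
  (T : {set state A}) : {set state A} :=
  \bigcup_(u in T) delta u a.

Definition delta_inv (Sigma : finType) (A : NFA Sigma) (u : state A) (a : Sigma)
  : {set state A} := [set v | u \in delta v a].

Definition inv_NFA (Sigma : finType) (A : NFA Sigma) : NFA Sigma :=
  @mkNFA Sigma (state A) (@delta_inv Sigma A) (start A).

Definition is_bisimulation (Sigma : finType) (A : NFA Sigma)
  (B : rel (state A)) : Prop :=
  forall u v, B u v -> forall a : Sigma,
    (forall u', u' \in delta u a -> exists2 v', v' \in delta v a & B u' v') /\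
    (forall v', v' \in delta v a -> exists2 u', u' \in delta u a & B u' v').

(* P_B : partition of Q into weakly connected components of the digraph (Q, B) *)
Definition partition_of_rel (Q : finType) (B : rel Q) : {set {set Q}} :=
  equivalence_partition (connect (fun u v => B u v || B v u)) [set: Q].

Definition forward_stable (Sigma : finType) (A : NFA Sigma)
  (P : {set {set state A}}) : Prop :=
  forall S T, S \in P -> T \in P -> forall a : Sigma,
    S \subset delta_set a T \/ S :&: delta_set a T = set0.

Arguments is_bisimulation {Sigma} A B.
Arguments forward_stable {Sigma} A P.

From mathcomp Require Import all_boot.

(* A bisimulation of the reversed automaton lets every backward a-step be
   matched from a related state, so the a-successor set of a union of
   B-components is again a union of B-components.  Each a-successor set of a
   block of P_B therefore either contains or misses any other block. *)

Set Implicit Arguments.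
Unset Strict Implicit.
Unset Printing Implicit Defensive.

Definition sym_rel (T : Type) (B : rel T) : rel T := fun u v => B u v || B v u.

Lemma sym_rel_sym (T : Type) (B : rel T) : symmetric (sym_rel B).
Proof. by move=> u v; rewrite /sym_rel orbC. Qed.

Section ConnectPartition.

Variables (T : finType) (e : rel T).
Hypothesis sym_e : connect_sym e.

Lemma equivalence_partition_connect_closed S :
  S \in equivalence_partition (connect e) [set: T] -> closed e S.
Proof.
by case/imsetP=> x _ -> u v euv; rewrite !inE; apply: connect_closed.
Qed.

Lemma equivalence_partition_connect_split S (X : {set T}) :
  S \in equivalence_partition (connect e) [set: T] -> closed e X ->
  S \subset X \/ S :&: X = set0.
Proof.
case/imsetP=> x _ -> closedX.
have [|[z]] := set_0Vmem ([set y in [set: T] | connect e x y] :&: X).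
  by right.
rewrite !inE => /andP[xz Xz]; left; apply/subsetP=> w; rewrite !inE => xw.
by rewrite -(closed_connect closedX (x := z)) // (connect_trans _ xw) // sym_e.
Qed.

End ConnectPartition.

Section ReverseBisimulation.

Variables (Sigma : finType) (A : NFA Sigma) (B : rel (state A)).
Hypothesis bisimB : is_bisimulation (inv_NFA A) B.

Lemma inv_bisimulation_transfer_pred u v t a :
  sym_rel B u v -> u \in delta t a ->
  exists2 t', v \in delta t' a & sym_rel B t t'.
Proof.
have pred_inv (w w' : state A) : (w' \in delta_inv w a) = (w \in delta w' a).
  by rewrite inE.
move=> /orP[Buv | Bvu]; rewrite -pred_inv => ut.
- have [t' + Btt'] := (bisimB Buv a).1 t ut.
  by rewrite pred_inv => vt'; exists t'; rewrite // /sym_rel Btt'.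
- have [t' + Bt't] := (bisimB Bvu a).2 t ut.
  by rewrite pred_inv => vt'; exists t'; rewrite // /sym_rel Bt't orbT.
Qed.

Lemma delta_set_closed a (X : {set state A}) :
  closed (sym_rel B) X -> closed (sym_rel B) (delta_set a X).
Proof.
move=> closedX; apply: intro_closed; first exact/sym_connect_sym/sym_rel_sym.
move=> u v euv /bigcupP[t Xt ut].
have [t' vt' ett'] := inv_bisimulation_transfer_pred euv ut.
by apply/bigcupP; exists t'; rewrite // -(closedX _ _ ett').
Qed.

End ReverseBisimulation.

Theorem lemma20 (Sigma : finType) (A : NFA Sigma) (B : rel (state A)) :
  is_bisimulation (inv_NFA A) B ->
  forward_stable A (partition_of_rel B).
Proof.
move=> bisimB S T PS PT a.
have sym_e : connect_sym (sym_rel B) by apply/sym_connect_sym/sym_rel_sym.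
apply: (equivalence_partition_connect_split sym_e PS).
exact/delta_set_closed/(equivalence_partition_connect_closed sym_e PT).
Qed.
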